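(* Let $S$ and $T$ be semigroups and let $S\ast T$ be their semigroup free product. Then $S\ast T$ is $U(\mathrm{CF})$ if and only if both $S$ and $T$ are $U(\mathrm{CF})$. (That is, the class of $U(\mathrm{CF})$ semigroups is closed under semigroup free products and under taking free factors.)
   Context: For a semigroup $S$ generated by a finite set $A$, $\mathrm{WP}(S,A)=\{u\#v^{\mathrm{rev}} : u,v\in A^+,\ u=_S v\}$, where $\#\notin A$ and $v^{\mathrm{rev}}$ is the reversal of $v$. A semigroup is $U(\mathrm{CF})$ if it is finitely generated and its word problem with respect to some (equivalently any) finite generating set is context-free. *)

From Stdlib Require Import List.
From mathcomp Require Import all_boot.
Set Implicit Arguments. Unset Strict Implicit. Unset Printing Implicit Defensive.

Record semigroup := Semigroup {
  scarrier :> Type;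
  sop : scarrier -> scarrier -> scarrier;
  sassoc : forall x y z, sop x (sop y z) = sop (sop x y) z }.

Definition eval_word (S : semigroup) (A : Type) (gen : A -> S) (w : seq A) : option S :=
  match w with
  | [::] => None
  | a :: u => Some (foldl (fun s b => sop s (gen b)) (gen a) u)
  end.

Definition generates (S : semigroup) (A : finType) (gen : A -> S) : Prop :=
  forall x : S, exists w : seq A, eval_word gen w = Some x.

(* Word problem WP(S,A) over the alphabet A ∪ {#}, encoded as option A (None = #). *)
Definition WP (S : semigroup) (A : finType) (gen : A -> S) (w : seq (option A)) : Prop :=
  exists u v : seq A, u <> [::] /\ v <> [::] /\ eval_word gen u = eval_word gen v /\
    w = map Some u ++ None :: map Some (rev v).

Section CFG.
Variables (Sigma : Type) (N : Type).
Definition rule := (N * seq (N + Sigma))%type.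

Definition cfg_step (R : seq rule) (x y : seq (N + Sigma)) : Prop :=
  exists (l r : seq (N + Sigma)) (X : N) (rhs : seq (N + Sigma)),
    List.In (X, rhs) R /\ x = l ++ inl X :: r /\ y = l ++ rhs ++ r.

Inductive cfg_derives (R : seq rule) : seq (N + Sigma) -> seq (N + Sigma) -> Prop :=
  | cfg_refl x : cfg_derives R x x
  | cfg_trans x y z : cfg_step R x y -> cfg_derives R y z -> cfg_derives R x z.
End CFG.

Definition context_free (Sigma : Type) (L : seq Sigma -> Prop) : Prop :=
  exists (N : finType) (S0 : N) (R : seq (rule Sigma N)),
    forall w : seq Sigma, L w <-> cfg_derives R [:: inl S0] (map inr w).

Definition UCF (S : semigroup) : Prop :=
  exists (A : finType) (gen : A -> S), generates gen /\ context_free (WP gen).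

Section FreeProduct.
Variables S T : semigroup.
Definition letter := (S + T)%type.

Definition side (x : letter) : bool := if x is inl _ then true else false.

Fixpoint alt (w : seq letter) : bool :=
  match w with
  | x :: ((y :: _) as w') => (side x != side y) && alt w'
  | _ => true
  end.

Definition reduced (w : seq letter) : bool := (0 < size w) && alt w.

Definition pushL (x : letter) (w : seq letter) : seq letter :=
  match x, w with
  | inl a, inl b :: w' => inl (sop a b) :: w'
  | inr a, inr b :: w' => inr (sop a b) :: w'
  | _, _ => x :: w
  end.

Lemma pushL_pushL (a b : letter) w : side a = side b ->
  pushL a (pushL b w) = pushL (match a, b with
                               | inl a', inl b' => inl (sop a' b')
                               | inr a', inr b' => inr (sop a' b')
                               | _, _ => a end) w.
Proof.
by case: a => a; case: b => b //= _; case: w => [|[c|c] w] //=; rewrite sassoc.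
Qed.

Lemma foldr_pushL_pushL z a r :
  foldr pushL z (pushL a r) = pushL a (foldr pushL z r).
Proof.
case: r => [|b r]; first by case: a.
case: a => a; case: b => b /=; try reflexivity;
  by case: (foldr pushL z r) => [|[c|c] w] //=; rewrite sassoc.
Qed.

Lemma foldr_pushL_assoc x y z :
  foldr pushL z (foldr pushL y x) = foldr pushL (foldr pushL z y) x.
Proof. by elim: x => [|a x IH] //=; rewrite foldr_pushL_pushL IH. Qed.

Lemma reduced_pushL a w : reduced w -> reduced (pushL a w).
Proof.
case: w => [|b w] //; rewrite /reduced /= => Hw.
move: Hw; case: a => a; case: b => b /=; case: w => [|[c|c] w] //=.
Qed.

Lemma reduced_foldr x y : reduced y -> reduced (foldr pushL y x).
Proof. by elim: x => [|a x IH] //= Hy; apply: reduced_pushL; apply: IH. Qed.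

Definition fp_carrier := {w : seq letter | reduced w}.

Definition fp_mul (x y : fp_carrier) : fp_carrier :=
  exist _ (foldr pushL (sval y) (sval x)) (reduced_foldr (sval x) (proj2_sig y)).

Lemma fp_assoc x y z : fp_mul x (fp_mul y z) = fp_mul (fp_mul x y) z.
Proof.
apply: val_inj => /=; by rewrite foldr_pushL_assoc.
Qed.

(* S * T: nonempty alternating sequences of elements of S and T, with
   concatenation followed by merging at the junction. *)
Definition free_product : semigroup := Semigroup fp_assoc.
End FreeProduct.

From Stdlib Require Import List.
From mathcomp Require Import all_boot.
Set Implicit Arguments. Unset Strict Implicit. Unset Printing Implicit Defensive.

(* Each free factor embeds in S * T with a retraction
   whose domain is the image, and the complement of the image is an ideal
   (a product has a letter from T as soon as a factor has one).  For such a
   retract, a word over the generators of S * T representing an element of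
   the factor only uses generators lying in the factor; so the word problem
   of the factor is the restriction of that of S * T to a subalphabet, which
   is context-free by restricting the grammar (lemma [ucf_retract]).

   Over the union of generating sets, a word u # v^rev
   of the word problem of S * T whose u starts with a generator of S splits
   as u1 u' # v'^rev v1^rev with u1, v1 maximal blocks from S: u1 = v1 in S and
   either u', v' are empty or u' # v'^rev is in the part starting with T
   (uniqueness of normal forms, [WP_side_nestE]).  The two parts of the word
   problem are thus the solution of two mutually recursive "nesting"
   equations; the grammar obtained by substituting in the grammars of the
   factors the symbol # by "# or the other part" solves the same equations
   ([yields_startS]), and such solutions are unique ([local_fixpoint_unique]). *)

(** Context-free grammars: derivation trees. *)
Section Yield.
Variables (Sigma N : Type) (R : seq (rule Sigma N)).

(* [yields R x w]: the sentential form [x] derives the terminal word [w]; this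
   is the derivation-tree presentation of [cfg_derives R x (map inr w)], which
   unlike rewriting sequences can be split along concatenations. *)
Inductive yields : seq (N + Sigma) -> seq Sigma -> Prop :=
| yields_nil : yields [::] [::]
| yields_t a x w : yields x w -> yields (inr a :: x) (a :: w)
| yields_n X rhs x w1 w2 : List.In (X, rhs) R -> yields rhs w1 -> yields x w2 ->
    yields (inl X :: x) (w1 ++ w2).

Lemma yields_cat x y w1 w2 : yields x w1 -> yields y w2 -> yields (x ++ y) (w1 ++ w2).
Proof.
elim=> [|a x' w' _ IH|X rhs x' v1 v2 Hin Hr _ _ IH] //= Hy.
- by constructor; apply: IH.
- by rewrite -catA; econstructor; eauto.
Qed.

Lemma yields_split x y w : yields (x ++ y) w ->
  exists w1 w2, w = w1 ++ w2 /\ yields x w1 /\ yields y w2.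
Proof.
elim: x w => [|[X|a] x IH] w /= H.
- by exists [::], w; do !split=> //; constructor.
- inversion H; subst.
  have [v1 [v2 [-> [K1 K2]]]] := IH _ H5.
  by exists (w1 ++ v1), v2; rewrite catA; do !split=> //; econstructor; eauto.
- inversion H; subst.
  have [v1 [v2 [-> [K1 K2]]]] := IH _ H3.
  by exists (a :: v1), v2; do !split=> //; constructor.
Qed.

Lemma yields_terminals w : yields (map inr w) w.
Proof. by elim: w => [|a w IH] /=; constructor. Qed.

Lemma yields_letter a w : yields [:: inr a] w -> w = [:: a].
Proof. by move=> H; inversion H; subst; inversion H3. Qed.

Lemma yields_nonterminal X w :
  yields [:: inl X] w <-> exists rhs, List.In (X, rhs) R /\ yields rhs w.
Proof.
split=> [H|[rhs [Hin Hr]]]; last by rewrite -[w]cats0; econstructor; eauto; constructor.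
by inversion H as [| |X' rhs x w1 w2 Hin Hr Hx]; inversion Hx; exists rhs; rewrite cats0.
Qed.

Lemma yields_letterE a w : yields [:: inr a] w <-> w = [:: a].
Proof. by split=> [/yields_letter|->]; last exact: (yields_terminals [:: a]). Qed.

Lemma yields_two_rules X r1 r2 w :
  (forall rhs, List.In (X, rhs) R <-> rhs = r1 \/ rhs = r2) ->
  yields [:: inl X] w <-> yields r1 w \/ yields r2 w.
Proof.
move=> rulesX; rewrite yields_nonterminal; split=> [[rhs [/rulesX [->|->]]]|[]]; auto.
- by move=> H; exists r1; split=> //; apply/rulesX; left.
- by move=> H; exists r2; split=> //; apply/rulesX; right.
Qed.

Lemma derives_ctx l r x y :
  cfg_derives R x y -> cfg_derives R (l ++ x ++ r) (l ++ y ++ r).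
Proof.
elim=> [x0|x0 y0 z0 [l' [r' [X [rhs [Hin [-> ->]]]]]] _ IH]; first by constructor.
apply: cfg_trans IH; exists (l ++ l'), (r' ++ r), X, rhs.
by split=> //; split; rewrite -!catA.
Qed.

Lemma derives_trans x y z :
  cfg_derives R x y -> cfg_derives R y z -> cfg_derives R x z.
Proof. by elim=> // x0 y0 z0 Hs _ IH Hz; apply: cfg_trans Hs (IH Hz). Qed.

Lemma yields_derives x w : yields x w -> cfg_derives R x (map inr w).
Proof.
elim=> [|a x' w' _ IH|X rhs x' v1 v2 Hin _ IH1 _ IH2]; first by constructor.
- by have := derives_ctx [:: inr a] [::] IH; rewrite /= !cats0.
- apply: cfg_trans; first by exists [::], x', X, rhs.
  rewrite /= map_cat; apply: derives_trans; first exact: (derives_ctx [::] x' IH1).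
  by have := derives_ctx (map inr v1) [::] IH2; rewrite !cats0.
Qed.

Lemma derives_yields x w : cfg_derives R x (map inr w) -> yields x w.
Proof.
move Hy: (map inr w) => y H.
elim: H w Hy => [x0|x0 y0 z0 [l [r [X [rhs [Hin [-> ->]]]]]] _ IH] w Hy.
  by subst; apply: yields_terminals.
have /yields_split [w1 [w2 [-> [H1 /yields_split [v1 [v2 [-> [H2 H3]]]]]]]] := IH _ Hy.
by apply: yields_cat => //; apply: yields_n Hin H2 H3.
Qed.

Lemma yields_derivesE x w : yields x w <-> cfg_derives R x (map inr w).
Proof. by split; [apply: yields_derives|apply: derives_yields]. Qed.
End Yield.

(** Substituting a grammar into a grammar.  [R] contains a copy of the rules
    of [R0], with nonterminals renamed by [e] and each terminal [a] replaced by
    the symbol [t a]; what [R] yields from a lifted sentential form is then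
    obtained from what [R0] yields by replacing each letter [a] by a word
    yielded from [t a]. *)
Section Substitution.
Variables (Sigma N Sigma0 N0 : Type) (R : seq (rule Sigma N)) (R0 : seq (rule Sigma0 N0)).
Variables (e : N0 -> N) (t : Sigma0 -> N + Sigma).

Definition lift_symbol (s : N0 + Sigma0) : N + Sigma :=
  match s with inl X => inl (e X) | inr a => t a end.

Hypothesis lift_rules : forall X rhs,
  List.In (X, rhs) R0 -> List.In (e X, map lift_symbol rhs) R.
Hypothesis lifted_rules : forall X rhs, List.In (e X, rhs) R ->
  exists rhs0, List.In (X, rhs0) R0 /\ rhs = map lift_symbol rhs0.

Inductive subst_word : seq Sigma0 -> seq Sigma -> Prop :=
| subst_nil : subst_word [::] [::]
| subst_cons a z w1 w2 :
    yields R [:: t a] w1 -> subst_word z w2 -> subst_word (a :: z) (w1 ++ w2).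

Lemma subst_cat z1 z2 w1 w2 :
  subst_word z1 w1 -> subst_word z2 w2 -> subst_word (z1 ++ z2) (w1 ++ w2).
Proof. by elim=> //= a z v1 v2 H _ IH H2; rewrite -catA; constructor; auto. Qed.

Lemma subst_split z1 z2 w : subst_word (z1 ++ z2) w ->
  exists w1 w2, w = w1 ++ w2 /\ subst_word z1 w1 /\ subst_word z2 w2.
Proof.
elim: z1 w => [|a z IH] w /= H; first by exists [::], w; do !split=> //; constructor.
inversion H; subst; have [v1 [v2 [-> [K1 K2]]]] := IH _ H4.
by exists (w1 ++ v1), v2; rewrite catA; do !split=> //; constructor.
Qed.

Lemma yields_lift_subst x w : yields R (map lift_symbol x) w ->
  exists z, yields R0 x z /\ subst_word z w.
Proof.
move Hx: (map lift_symbol x) => xx H.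
elim: H x Hx => [|a xx' w' _ IH|X rhs xx' w1 w2 Hin Hr IHr _ IHx] x Hx.
- by case: x Hx => // _; exists [::]; split; constructor.
- case: x Hx => // -[X0|s0] x' //= [Ht Hx'].
  have [z [Hz1 Hz2]] := IH _ Hx'.
  exists (s0 :: z); split; first by constructor.
  by rewrite -[a :: w']cat1s; constructor=> //; rewrite Ht; do !constructor.
- case: x Hx => // -[X0|s0] x' /= [Ht Hx'].
  + subst X; have [rhs0 [Hin0 Hrhs]] := lifted_rules Hin.
    have [z1 [Hz1 Hs1]] := IHr _ (esym Hrhs).
    have [z2 [Hz2 Hs2]] := IHx _ Hx'.
    by exists (z1 ++ z2); split; [econstructor; eauto|apply: subst_cat].
  + have [z2 [Hz2 Hs2]] := IHx _ Hx'.
    exists (s0 :: z2); split; first by constructor.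
    constructor=> //; rewrite Ht -[w1]cats0; exact: yields_n Hin Hr (yields_nil R).
Qed.

Lemma subst_yields_lift x z : yields R0 x z ->
  forall w, subst_word z w -> yields R (map lift_symbol x) w.
Proof.
elim=> [|a x' z' _ IH|X rhs x' z1 z2 Hin _ IH1 _ IH2] w /=.
- by move=> H; inversion H; constructor.
- by move=> H; inversion H; subst; have := yields_cat H2 (IH _ H4).
- case/subst_split=> [w1 [w2 [-> [H1 H2]]]].
  by econstructor; [apply: lift_rules; eauto|apply: IH1|apply: IH2].
Qed.

Lemma yields_liftE x w :
  yields R (map lift_symbol x) w <-> exists z, yields R0 x z /\ subst_word z w.
Proof.
split; first exact: yields_lift_subst.
by case=> z [H1 H2]; apply: subst_yields_lift H1 _ H2.
Qed.

End Substitution.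

(** The case of interest: [R0] generates a language of words [u # v] over the
    alphabet [option AX] ([None] playing the role of [#]); in [R] the letters of
    [AX] are renamed by [emb] and [#] is replaced by a nonterminal [h] yielding
    exactly the words [[:: hash]] and those of [L]. *)
Section HashSubstitution.
Variables (Sigma N AX N0 : Type) (R : seq (rule Sigma N)) (R0 : seq (rule (option AX) N0)).
Variables (e : N0 -> N) (emb : AX -> Sigma) (h : N) (hash : Sigma).
Variables (L : seq Sigma -> Prop) (E : seq AX -> seq AX -> Prop) (Z0 : N0).

Definition hash_subst (o : option AX) : N + Sigma :=
  if o is Some a then inr (emb a) else inl h.

Hypothesis lift_rules : forall X rhs,
  List.In (X, rhs) R0 -> List.In (e X, map (lift_symbol e hash_subst) rhs) R.
Hypothesis lifted_rules : forall X rhs, List.In (e X, rhs) R ->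
  exists rhs0, List.In (X, rhs0) R0 /\ rhs = map (lift_symbol e hash_subst) rhs0.
Hypothesis yields_R0 : forall z, yields R0 [:: inl Z0] z <->
  exists u v, E u v /\ z = map Some u ++ None :: map Some (rev v).
Hypothesis yields_h : forall y, yields R [:: inl h] y <-> y = [:: hash] \/ L y.

Lemma subst_letters u w : subst_word R hash_subst (map Some u) w <-> w = map emb u.
Proof.
split=> [|->]; elim: u w => [|a u IH] w /=; try by [move=> H; inversion H|constructor].
- by move=> H; inversion H; subst; rewrite (yields_letter H2) (IH _ H4).
- by rewrite -[emb a :: _]cat1s; do !constructor; apply: IH.
Qed.

Lemma subst_hash u v w :
  subst_word R hash_subst (map Some u ++ None :: map Some v) w <->
  exists y, (y = [:: hash] \/ L y) /\ w = map emb u ++ y ++ map emb v.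
Proof.
split=> [/subst_split [w1 [w2 [-> [/subst_letters -> H2]]]]|[y [Hy ->]]].
  inversion H2 as [|a z y w3 Hy Hz]; subst.
  by exists y; split; [apply/yields_h|move/subst_letters: Hz => ->].
apply: subst_cat; first exact/subst_letters.
by constructor; [apply/yields_h|apply/subst_letters].
Qed.

Lemma yields_hash_subst w : yields R [:: inl (e Z0)] w <->
  exists u v y, E u v /\ (y = [:: hash] \/ L y) /\ w = map emb u ++ y ++ map emb (rev v).
Proof.
rewrite -[[:: inl (e Z0)]]/(map (lift_symbol e hash_subst) [:: inl Z0]).
rewrite (yields_liftE lift_rules lifted_rules); split.
- case=> z [/yields_R0 [u [v [Huv ->]]] /subst_hash [y [Hy ->]]].
  by exists u, v, y.
- case=> u [v [y [Huv [Hy ->]]]]; exists (map Some u ++ None :: map Some (rev v)).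
  by split; [apply/yields_R0; exists u, v|apply/subst_hash; exists y].
Qed.
End HashSubstitution.

(** Restricting a grammar to a subalphabet [Sigma'], embedded in [Sigma] by [f]
    with partial inverse [g]: rules mentioning letters outside the image of
    [f] are discarded; the restricted grammar yields exactly the words of the
    original grammar that lie over [Sigma']. *)
Section Restriction.
Variables (Sigma Sigma' N : Type) (R : seq (rule Sigma N)).
Variables (f : Sigma' -> Sigma) (g : Sigma -> option Sigma').
Hypothesis gfK : forall b, g (f b) = Some b.
Hypothesis gP : forall a b, g a = Some b -> a = f b.

Definition lift_letter (s : N + Sigma') : N + Sigma :=
  match s with inl X => inl X | inr b => inr (f b) end.

Fixpoint pullback (x : seq (N + Sigma)) : option (seq (N + Sigma')) :=
  match x with
  | [::] => Some [::]
  | inl X :: x' => omap (cons (inl X)) (pullback x')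
  | inr a :: x' => if (g a, pullback x') is (Some b, Some x'') then Some (inr b :: x'')
                   else None
  end.

Lemma pullbackP x x' : pullback x = Some x' -> x = map lift_letter x'.
Proof.
elim: x x' => [|[X|a] x IH] x' /=; first by case=> <-.
- by case E: (pullback x) => [y|] //= [<-] /=; rewrite -(IH _ E).
- case Eg: (g a) => [b|] //; case E: (pullback x) => [y|] // [<-] /=.
  by rewrite -(IH _ E) -(gP Eg).
Qed.

Definition restrict : seq (rule Sigma' N) :=
  pmap (fun r => omap (pair r.1) (pullback r.2)) R.

Lemma in_restrict X rhs' : List.In (X, rhs') restrict <->
  exists rhs, List.In (X, rhs) R /\ pullback rhs = Some rhs'.
Proof.
rewrite /restrict; elim: R => [|[Y rhs] R' IH] /=; first by split=> // -[? []].
case E: (pullback rhs) => [y|] /=.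
- split.
  + case=> [[<- <-]|/IH [r [H1 H2]]]; first by exists rhs; split; [left|].
    by exists r; split; [right|].
  + case=> r [[[<- <-]|H1] H2]; first by left; rewrite E in H2; case: H2 => ->.
    by right; apply/IH; exists r.
- rewrite IH; split; case=> r [H1 H2]; exists r; split=> //; first by right.
  by case: H1 => // -[_ Hr]; subst; rewrite E in H2.
Qed.

Lemma yields_restrict x' w' :
  yields restrict x' w' -> yields R (map lift_letter x') (map f w').
Proof.
elim=> [|a x w _ IH|X rhs x w1 w2 Hin _ IH1 _ IH2] /=; first by constructor.
- by constructor.
- rewrite map_cat; have [rhs0 [H1 H2]] := (in_restrict X rhs).1 Hin.
  by econstructor; eauto; rewrite (pullbackP H2).
Qed.

Lemma yields_unrestrict x w : yields R x w -> forall w', w = map f w' ->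
  exists x', pullback x = Some x' /\ yields restrict x' w'.
Proof.
elim=> [|a x0 w0 _ IH|X rhs x0 w1 w2 Hin _ IH1 _ IH2] w' Hw.
- by case: w' Hw => // _; exists [::]; split=> //; constructor.
- case: w' Hw => // b w' [-> Hw].
  have [x' [E H]] := IH _ Hw.
  by exists (inr b :: x'); rewrite /= gfK E; split=> //; constructor.
- have E1 : w1 = map f (take (size w1) w') by rewrite map_take -Hw take_size_cat.
  have E2 : w2 = map f (drop (size w1) w') by rewrite map_drop -Hw drop_size_cat.
  have [r1 [C1 G1]] := IH1 _ E1.
  have [r2 [C2 G2]] := IH2 _ E2.
  exists (inl X :: r2); rewrite /= C2; split=> //.
  rewrite -(cat_take_drop (size w1) w'); econstructor; eauto.
  by apply/in_restrict; exists rhs.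
Qed.

Lemma yields_restrictE X w :
  yields restrict [:: inl X] w <-> yields R [:: inl X] (map f w).
Proof.
split=> [/yields_restrict //|/yields_unrestrict H].
by have [x' [[<-] ?]] := H w erefl.
Qed.
End Restriction.

Section Evaluation.
Variables (X : semigroup) (A : Type) (gen : A -> X).

Definition eval_from (s : X) (u : seq A) : X := foldl (fun s b => sop s (gen b)) s u.

Lemma eval_cons a u : eval_word gen (a :: u) = Some (eval_from (gen a) u).
Proof. by []. Qed.

Lemma eval_from_mul s t v : eval_from (sop s t) v = sop s (eval_from t v).
Proof. by elim: v t => [|b v IH] t //=; rewrite -sassoc IH. Qed.

Lemma eval_cat u v x y : eval_word gen u = Some x -> eval_word gen v = Some y ->
  eval_word gen (u ++ v) = Some (sop x y).
Proof.
case: u => // a u [<-]; case: v => // b v [<-] /=.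
by rewrite foldl_cat /=; congr Some; apply: eval_from_mul.
Qed.

Lemma eval_nonempty u : u <> [::] -> exists x, eval_word gen u = Some x.
Proof. by case: u => // a u _; exists (eval_from (gen a) u). Qed.
End Evaluation.

Lemma eval_hom (X Y : semigroup) (A B : Type) (genA : A -> X) (genB : B -> Y)
    (h : A -> B) (phi : X -> Y) :
  (forall x y, phi (sop x y) = sop (phi x) (phi y)) ->
  (forall a, genB (h a) = phi (genA a)) ->
  forall u, eval_word genB (map h u) = omap phi (eval_word genA u).
Proof.
move=> phiM genh [|a u] //=; congr Some; rewrite genh.
by elim: u (genA a) => [|b u IH] s //=; rewrite -IH phiM genh.
Qed.

Lemma map_omap_Some (A B : Type) (h : A -> B) (w : seq (option A)) (u : seq B) :
  map (omap h) w = map Some u -> exists u', w = map Some u' /\ u = map h u'.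
Proof.
elim: w u => [|[a|] w IH] [|b u] //=; first by exists [::].
by case=> <- /IH [u' [-> ->]]; exists (a :: u').
Qed.

Lemma map_omap_hash (A B : Type) (h : A -> B) (w : seq (option A)) (u v : seq B) :
  map (omap h) w = map Some u ++ None :: map Some v ->
  exists u' v', w = map Some u' ++ None :: map Some v' /\ u = map h u' /\ v = map h v'.
Proof.
elim: u w => [|b u IH] [|[a|] w] //= [].
- by move=> /map_omap_Some [v' [-> ->]]; exists [::], v'.
- by move=> <- /IH [u' [v' [-> [-> ->]]]]; exists (a :: u'), v'.
Qed.

Lemma WP_hom (X P : semigroup) (AX A : finType) (genX : AX -> X) (gen : A -> P)
    (h : AX -> A) (phi : X -> P) :
  (forall x y, phi (sop x y) = sop (phi x) (phi y)) -> injective phi ->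
  (forall a, gen (h a) = phi (genX a)) ->
  forall w, WP genX w <-> WP gen (map (omap h) w).
Proof.
move=> phiM phi_inj genh w; split.
- case=> u [v [Hu [Hv [Huv ->]]]]; exists (map h u), (map h v).
  rewrite !(eval_hom phiM genh) Huv map_cat /= -map_rev -!map_comp.
  by do !split=> //; [case: (u) Hu|case: (v) Hv].
- case=> u [v [Hu [Hv [Huv /map_omap_hash [u' [v' [-> [Eu Ev]]]]]]]].
  have Ev' : v = map h (rev v') by rewrite map_rev -Ev revK.
  exists u', (rev v'); rewrite revK; do !split => //.
  + by move=> E; apply: Hu; rewrite Eu E.
  + by move=> E; apply: Hv; rewrite Ev' E.
  + move: Huv; rewrite Eu Ev' !(eval_hom phiM genh).
    by case: eval_word => [x|]; case: eval_word => [y|] //= [/phi_inj ->].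
Qed.

Definition oget (T : Type) (o : option T) : o -> T :=
  match o return o -> T with
  | Some x => fun=> x
  | None => fun h => False_rect T (Bool.diff_false_true h)
  end.

Lemma ogetK (T : Type) (o : option T) (h : o) : o = Some (oget h).
Proof. by case: o h. Qed.

(** A word over generators of [P] representing
    an element of the image only uses generators from the image, so the word
    problem of [X] is the restriction of that of [P] to those generators. *)
Section Retract.
Variables (X P : semigroup) (phi : X -> P) (proj : P -> option X).
Hypothesis phiM : forall x y, phi (sop x y) = sop (phi x) (phi y).
Hypothesis projK : forall x, proj (phi x) = Some x.
Hypothesis projP : forall p x, proj p = Some x -> p = phi x.
Hypothesis proj_ideal : forall p q, proj (sop p q) -> proj p && proj q.

Lemma phi_inj : injective phi.
Proof. by move=> x y E; apply: Some_inj; rewrite -!projK E. Qed.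

Variables (A : finType) (gen : A -> P).

Definition in_image : pred A := fun a => proj (gen a).
Notation sub_alphabet := {a : A | in_image a}.
Definition sub_gen (b : sub_alphabet) : X := oget (valP b).

Lemma sub_genP b : gen (val b) = phi (sub_gen b).
Proof. exact/projP/(ogetK (valP b)). Qed.

Lemma eval_in_image s u :
  proj (eval_from gen s u) -> proj s && all in_image u.
Proof.
elim: u s => [|a u IH] s /=; first by rewrite andbT.
by move=> /IH /andP [/proj_ideal /andP [Hs Ha] Hu]; rewrite Hs Hu andbT.
Qed.

Definition sub_letter (o : option A) : option (option sub_alphabet) :=
  if o is Some a then omap Some (insub a) else Some None.

Lemma sub_letterK o : sub_letter (omap val o) = Some o.
Proof. by case: o => [b|] //=; rewrite valK. Qed.

Lemma sub_letterP a b : sub_letter a = Some b -> a = omap val b.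
Proof. by case: a => [a|[<-]] //=; case: insubP => [b' _ <- [<-]|]. Qed.

Lemma ucf_retract : generates gen -> context_free (WP gen) -> UCF X.
Proof.
move=> gens [N [Z [R HR]]]; exists (sub_alphabet : finType), sub_gen; split.
- move=> x; have [[|a u] // Hu] := gens (phi x).
  have /all_sigP [u' Eu] : all in_image (a :: u).
    by apply: eval_in_image; rewrite /eval_from; case: Hu => ->; rewrite projK.
  exists u'; move: Hu; rewrite Eu (eval_hom phiM sub_genP).
  by case: eval_word => //= y [/phi_inj ->].
- exists N, Z, (restrict R sub_letter) => w.
  rewrite (WP_hom phiM phi_inj sub_genP) HR -!yields_derivesE.
  by rewrite (yields_restrictE _ sub_letterK sub_letterP).
Qed.
End Retract.

Section FreeProductWords.
Variables S T : semigroup.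
Notation P := (free_product S T).
Notation letter := (letter S T).

Definition atom (l : letter) : P := exist _ [:: l] erefl.

Definition head_side (w : seq letter) : bool := if w is l :: _ then side l else true.

Lemma head_side_pushL l w : head_side (pushL l w) = side l.
Proof. by case: l => l; case: w => [|[l'|l'] w]. Qed.

Lemma pushL_cons l w : side l != head_side w -> pushL l w = l :: w.
Proof. by case: l => l; case: w => [|[l'|l'] w]. Qed.

Lemma head_side_mul (p q : P) : head_side (sval (sop p q)) = head_side (sval p).
Proof. by case: p => -[|l w] //= _; apply: head_side_pushL. Qed.

Lemma atom_mul_cons l (p : P) :
  side l != head_side (sval p) -> sval (sop (atom l) p) = l :: sval p.
Proof. exact: pushL_cons. Qed.

Lemma val_nonempty (p : P) : sval p <> [::].
Proof. by case: p => -[]. Qed.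

Definition has_side (c : bool) (w : seq letter) : bool := has (fun l => side l == c) w.

Lemma has_side_pushL c l w : (side l == c) || has_side c w -> has_side c (pushL l w).
Proof.
rewrite /has_side; case: l => l; case: w => [|[l'|l'] w] /=; try done;
  by case/orP=> [->|/orP [->|->]]; rewrite ?orbT.
Qed.

Lemma has_side_mul c (p q : P) :
  has_side c (sval p) || has_side c (sval q) -> has_side c (sval (sop p q)).
Proof.
case: p => w _ /=; elim: w => [|l w IH] //= /orP [/orP [H|H]|H]; apply: has_side_pushL.
- by rewrite H.
- by rewrite IH ?H ?orbT.
- by rewrite IH ?H ?orbT.
Qed.

(* Every element is a product of atoms, hence any generating set for the atoms
   generates [S * T]. *)
Lemma generates_of_atoms (A : finType) (gen : A -> P) :
  (forall l, exists u, eval_word gen u = Some (atom l)) -> generates gen.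
Proof.
move=> gen_atom [w Hw]; elim: w Hw => [|l [|l' w] IH] // Hw.
  by have [u Hu] := gen_atom l; exists u; rewrite Hu; congr Some; apply: val_inj.
have /andP [_ /andP [Hll' Hr]] := Hw.
have [u Hu] := gen_atom l; have [u' Hu'] := IH Hr.
exists (u ++ u'); rewrite (eval_cat Hu Hu'); congr Some; apply: val_inj.
exact: atom_mul_cons.
Qed.
End FreeProductWords.
Arguments atom {S T} l.

(** The free factors are retracts of [S * T] with ideal complement: an element
    lies in [S] iff its normal form has no letter from [T], a property
    inherited by both factors of a product. *)
Section FreeFactors.
Variables S T : semigroup.
Notation P := (free_product S T).

Definition proj_left (p : P) : option S := if sval p is [:: inl s] then Some s else None.
Definition proj_right (p : P) : option T := if sval p is [:: inr t] then Some t else None.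

Lemma proj_left_has (p : P) : isSome (proj_left p) = ~~ has_side false (sval p).
Proof. by case: p => -[|[s|t] [|[s'|t'] w]]. Qed.

Lemma proj_right_has (p : P) : isSome (proj_right p) = ~~ has_side true (sval p).
Proof. by case: p => -[|[s|t] [|[s'|t'] w]]. Qed.

Lemma ideal_of_missing_side (X : semigroup) (proj : P -> option X) c :
  (forall p, isSome (proj p) = ~~ has_side c (sval p)) ->
  forall p q, proj (sop p q) -> proj p && proj q.
Proof. by move=> projE p q; rewrite !projE -negb_or; apply: contra; apply: has_side_mul. Qed.

Lemma ucf_left_factor : UCF P -> UCF S.
Proof.
case=> A [gen [gens cf]].
apply: (@ucf_retract S P (fun s => atom (inl s)) proj_left) gens cf.
- by move=> x y; apply: val_inj.
- by [].
- by case=> -[|[s|t] [|l w]] //= Hw x [<-]; apply: val_inj.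
- exact: ideal_of_missing_side proj_left_has.
Qed.

Lemma ucf_right_factor : UCF P -> UCF T.
Proof.
case=> A [gen [gens cf]].
apply: (@ucf_retract T P (fun t => atom (inr t)) proj_right) gens cf.
- by move=> x y; apply: val_inj.
- by [].
- by case=> -[|[s|t] [|l w]] //= Hw x [<-]; apply: val_inj.
- exact: ideal_of_missing_side proj_right_has.
Qed.
End FreeFactors.

Definition WP_pair (X : semigroup) (AX : Type) (genX : AX -> X) (u v : seq AX) : Prop :=
  u <> [::] /\ v <> [::] /\ eval_word genX u = eval_word genX v.

Lemma WP_pairE (X : semigroup) (AX : finType) (genX : AX -> X) w :
  WP genX w <-> exists u v, WP_pair genX u v /\ w = map Some u ++ None :: map Some (rev v).
Proof.
by split=> [[u [v [? [? [? ->]]]]]|[u [v [[? [? ?]] ->]]]]; exists u, v.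
Qed.

Definition nest (X : semigroup) (AX B : Type) (genX : AX -> X) (ea : AX -> B)
    (L : seq (option B) -> Prop) (w : seq (option B)) : Prop :=
  exists u v y, WP_pair genX u v /\ (y = [:: None] \/ L y) /\
    w = map (Some \o ea) u ++ y ++ map (Some \o ea) (rev v).

Lemma nest_local (X : semigroup) (AX B : Type) (genX : AX -> X) (ea : AX -> B)
    (L L' : seq (option B) -> Prop) w :
  (forall y, size y < size w -> (L y <-> L' y)) -> nest genX ea L w <-> nest genX ea L' w.
Proof.
move=> LL'; suff sub : forall L1 L2, (forall y, size y < size w -> L1 y -> L2 y) ->
    nest genX ea L1 w -> nest genX ea L2 w.
  by split; apply: sub => y Hy; case: (LL' y Hy).
move=> L1 L2 L12 [u [v [y [[Hu Huv] [Hy Ew]]]]]; exists u, v, y; do !split=> //.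
case: Hy => [->|Hy]; [by left|right; apply: L12 Hy].
by rewrite Ew !size_cat size_map; case: (u) Hu => //= a u' _; rewrite addSn ltnS addnCA leq_addr.
Qed.

Lemma local_fixpoint_unique (W : Type) (sz : W -> nat) (F1 F2 : (W -> Prop) -> W -> Prop)
    (G1 G2 Q1 Q2 : W -> Prop) :
  (forall L L' w, (forall y, sz y < sz w -> (L y <-> L' y)) -> (F1 L w <-> F1 L' w)) ->
  (forall L L' w, (forall y, sz y < sz w -> (L y <-> L' y)) -> (F2 L w <-> F2 L' w)) ->
  (forall w, G1 w <-> F1 G2 w) -> (forall w, G2 w <-> F2 G1 w) ->
  (forall w, Q1 w <-> F1 Q2 w) -> (forall w, Q2 w <-> F2 Q1 w) ->
  forall w, (G1 w <-> Q1 w) /\ (G2 w <-> Q2 w).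
Proof.
move=> F1loc F2loc G1E G2E Q1E Q2E w; have [n] := ubnP (sz w).
elim: n w => // n IH w Hw; rewrite G1E G2E Q1E Q2E.
by split; [apply: F1loc|apply: F2loc] => y Hy; case: (IH y (leq_trans Hy Hw)).
Qed.

Section FreeProductWP.
Variables (S T : semigroup) (AS AT : finType) (genS : AS -> S) (genT : AT -> T).
Notation P := (free_product S T).
Notation A := (AS + AT)%type.

Definition gen_fp (c : A) : P :=
  match c with inl a => atom (inl (genS a)) | inr b => atom (inr (genT b)) end.

Definition letter_side (c : A) : bool := if c is inl _ then true else false.

Definition starts (b : bool) (u : seq A) : bool :=
  if u is c :: _ then letter_side c == b else false.

Lemma starts_eval b u p :
  eval_word gen_fp u = Some p -> starts b u = (head_side (sval p) == b).
Proof.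
case: u => // c u [<-]; congr (_ == b); rewrite -/(eval_from gen_fp _ u).
suff -> : head_side (sval (eval_from gen_fp (gen_fp c) u)) = head_side (sval (gen_fp c)).
  by case: c.
by elim: u (gen_fp c) => [|d u IH] s //=; rewrite IH head_side_mul.
Qed.

Definition WP_side (b : bool) (w : seq (option A)) : Prop :=
  exists u v, starts b u /\ v <> [::] /\ eval_word gen_fp u = eval_word gen_fp v /\
    w = map Some u ++ None :: map Some (rev v).

Lemma WP_sides w : WP gen_fp w <-> WP_side true w \/ WP_side false w.
Proof.
split=> [[[|[a|a] u] [v [// _ [Hv [Huv ->]]]]]|].
- by left; exists (inl a :: u), v.
- by right; exists (inr a :: u), v.
by case=> -[[|c u] [v [Hu [Hv [Huv ->]]]]] //; exists (c :: u), v.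
Qed.

(** One side [b] of the free product: a semigroup [X] with generators [genX],
    whose generators sit in [A] via [ea] and whose elements are the letters
    [inj x] of side [b]. *)
Section Side.
Variables (X : semigroup) (AX : Type) (genX : AX -> X) (ea : AX -> A).
Variables (inj : X -> letter S T) (b : bool).
Hypothesis side_inj : forall x, side (inj x) = b.
Hypothesis inj_inj : injective inj.
Hypothesis atom_hom : forall x y, atom (inj (sop x y)) = sop (atom (inj x)) (atom (inj y)).
Hypothesis gen_ea : forall a, gen_fp (ea a) = atom (inj (genX a)).
Hypothesis letter_sideP : forall c, letter_side c = b <-> exists a, c = ea a.

Lemma eval_block u : eval_word gen_fp (map ea u) = omap (atom \o inj) (eval_word genX u).
Proof. exact: eval_hom. Qed.

Lemma split_block u : exists u1 u', u = map ea u1 ++ u' /\ ~~ starts b u'.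
Proof.
elim: u => [|c u [u1 [u' [-> Hu']]]]; first by exists [::], [::].
have [/letter_sideP [a ->]|Hc] := eqVneq (letter_side c) b.
  by exists (a :: u1), u'.
by exists [::], (c :: map ea u1 ++ u').
Qed.

Lemma eval_split_block u1 u' s : eval_word genX u1 = Some s -> ~~ starts b u' ->
  omap sval (eval_word gen_fp (map ea u1 ++ u')) =
    Some (inj s :: odflt [::] (omap sval (eval_word gen_fp u'))).
Proof.
move=> Hs; have Hb : eval_word gen_fp (map ea u1) = Some (atom (inj s)) by rewrite eval_block Hs.
case: u' => [|c u'] Hu'; first by rewrite cats0 Hb.
rewrite (eval_cat Hb (eval_cons _ c u')) eval_cons; congr Some.
apply: atom_mul_cons; rewrite side_inj.
by rewrite (starts_eval b (eval_cons _ c u')) eq_sym in Hu'.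
Qed.

Lemma cancel_block u1 u' v1 v' :
  u1 <> [::] -> v1 <> [::] -> ~~ starts b u' -> ~~ starts b v' ->
  eval_word gen_fp (map ea u1 ++ u') = eval_word gen_fp (map ea v1 ++ v') ->
  eval_word genX u1 = eval_word genX v1 /\
  (u' = [::] /\ v' = [::] \/ u' <> [::] /\ v' <> [::] /\
    eval_word gen_fp u' = eval_word gen_fp v').
Proof.
move=> /(eval_nonempty genX) [s Hs] /(eval_nonempty genX) [t Ht] Hu' Hv' Huv.
have := eval_split_block Hs Hu'; rewrite Huv (eval_split_block Ht Hv').
case=> /inj_inj Ets Erest; rewrite Hs Ht Ets; split=> //.
case: u' v' {Hu' Hv' Huv} Erest => [|c u'] [|d v'] //=; [by left|..].
- by move=> /val_nonempty.
- by move=> /esym /val_nonempty.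
- by move=> /val_inj ->; right.
Qed.

Lemma WP_side_nest w : WP_side b w -> nest genX ea (WP_side (~~ b)) w.
Proof.
case=> u [v [Hu [Hv [Huv ->]]]].
have [u1 [u' [Eu Hu']]] := split_block u; have [v1 [v' [Ev Hv']]] := split_block v.
have Hu1 : u1 <> [::] by move=> E; move: Hu; rewrite Eu E (negbTE Hu').
have Hv1 : v1 <> [::].
  move=> E; have [p Hp] := eval_nonempty gen_fp Hv.
  have Hp' : eval_word gen_fp u = Some p by rewrite Huv.
  move: Hv'; rewrite -[v']/(map ea [::] ++ v') -E -Ev.
  by rewrite (starts_eval b Hp) -(starts_eval b Hp') Hu.
rewrite Eu Ev in Huv; have [Huv1 Hrest] := cancel_block Hu1 Hv1 Hu' Hv' Huv.
exists u1, v1, (map Some u' ++ None :: map Some (rev v')); do !split => //.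
  case: Hrest => [[-> ->]|[Hu'0 [Hv'0 Huv']]]; [by left|right].
  exists u', v'; do !split=> //.
  by case: u' Hu' Hu'0 {Huv Eu Huv'} => // c u' /=; case: (letter_side c); case: b.
by rewrite Eu Ev rev_cat !map_cat -!map_rev -!map_comp -!catA.
Qed.

Lemma nest_WP_side w : nest genX ea (WP_side (~~ b)) w -> WP_side b w.
Proof.
case=> u1 [v1 [y [[Hu1 [Hv1 Huv1]] [Hy ->]]]].
have [s Hs] := eval_nonempty genX Hu1.
have Hbu : eval_word gen_fp (map ea u1) = Some (atom (inj s)) by rewrite eval_block Hs.
have Hbv : eval_word gen_fp (map ea v1) = Some (atom (inj s)) by rewrite eval_block -Huv1 Hs.
have Hstart u' : starts b (map ea u1 ++ u').
  by case: (u1) Hu1 => // a u _ /=; apply/eqP/letter_sideP; exists a.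
have nonempty u' : map ea v1 ++ u' <> [::] by case: (v1) Hv1.
case: Hy => [->|[u [v [Hu [Hv [Huv ->]]]]]].
- exists (map ea u1), (map ea v1); do !split.
  + by have := Hstart [::]; rewrite cats0.
  + by have := nonempty [::]; rewrite cats0.
  + by rewrite Hbu Hbv.
  + by rewrite !(map_comp Some ea) !map_rev.
- have [p Hp] : exists p, eval_word gen_fp u = Some p.
    by apply: eval_nonempty; case: (u) Hu.
  have Hq : eval_word gen_fp v = Some p by rewrite -Huv.
  exists (map ea u1 ++ u), (map ea v1 ++ v); do !split => //.
    by rewrite (eval_cat Hbu Hp) (eval_cat Hbv Hq).
  by rewrite rev_cat !map_cat -!map_rev -!map_comp -!catA.
Qed.

Lemma WP_side_nestE w : WP_side b w <-> nest genX ea (WP_side (~~ b)) w.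
Proof. by split; [apply: WP_side_nest|apply: nest_WP_side]. Qed.
End Side.
End FreeProductWP.

(** The nonterminal [start_of b] of a
    renamed copy of the grammar of factor [b] has its [#] replaced by
    [hash_of b], which yields [#] or the language of [start_of (~~ b)]. *)
Section FreeProductGrammar.
Variables (S T : semigroup) (AS AT : finType) (genS : AS -> S) (genT : AT -> T).
Variables (NS NT : finType) (ZS : NS) (ZT : NT).
Variables (RS : seq (rule (option AS) NS)) (RT : seq (rule (option AT) NT)).
Hypothesis RS_WP : forall w, WP genS w <-> yields RS [:: inl ZS] w.
Hypothesis RT_WP : forall w, WP genT w <-> yields RT [:: inl ZT] w.

Notation A := (AS + AT)%type.
Notation Sig := (option A).
Definition nonterminal := ((NS + NT) + option bool)%type.

Definition ntS (X : NS) : nonterminal := inl (inl X).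
Definition ntT (X : NT) : nonterminal := inl (inr X).
Definition hash_of (b : bool) : nonterminal := inr (Some b).
Definition start : nonterminal := inr None.
Definition start_of (b : bool) : nonterminal := if b then ntS ZS else ntT ZT.

Definition liftS : NS + option AS -> nonterminal + Sig :=
  lift_symbol ntS (hash_subst (Some \o inl) (hash_of true)).
Definition liftT : NT + option AT -> nonterminal + Sig :=
  lift_symbol ntT (hash_subst (Some \o inr) (hash_of false)).

Definition hash_rules (b : bool) : seq (rule Sig nonterminal) :=
  [:: (hash_of b, [:: inr None]); (hash_of b, [:: inl (start_of (~~ b))])].

Definition start_rules : seq (rule Sig nonterminal) :=
  [:: (start, [:: inl (start_of true)]); (start, [:: inl (start_of false)])].

Definition grammar : seq (rule Sig nonterminal) :=
  map (fun r => (ntS r.1, map liftS r.2)) RS ++ map (fun r => (ntT r.1, map liftT r.2)) RT ++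
  hash_rules true ++ hash_rules false ++ start_rules.

Lemma in_grammar Y rhs : List.In (Y, rhs) grammar <->
  (exists X rhs0, List.In (X, rhs0) RS /\ Y = ntS X /\ rhs = map liftS rhs0) \/
  (exists X rhs0, List.In (X, rhs0) RT /\ Y = ntT X /\ rhs = map liftT rhs0) \/
  List.In (Y, rhs) (hash_rules true ++ hash_rules false ++ start_rules).
Proof.
rewrite /grammar 2!in_app_iff !in_map_iff; split.
- by case=> [[[X r] [[<- <-] H]]|[[[X r] [[<- <-] H]]|H]]; [left|right; left|right; right];
    try exists X, r.
- by case=> [[X [r [H [-> ->]]]]|[[X [r [H [-> ->]]]]|H]]; [left|right; left|right; right];
    try exists (X, r).
Qed.

Lemma lifted_rulesS X rhs : List.In (ntS X, rhs) grammar ->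
  exists rhs0, List.In (X, rhs0) RS /\ rhs = map liftS rhs0.
Proof.
case/in_grammar=> [[X0 [r [H [[->] ->]]]]|[[X0 [r [_ [] //]]]|]]; first by exists r.
by rewrite /= => H; intuition discriminate.
Qed.

Lemma lifted_rulesT X rhs : List.In (ntT X, rhs) grammar ->
  exists rhs0, List.In (X, rhs0) RT /\ rhs = map liftT rhs0.
Proof.
case/in_grammar=> [[X0 [r [_ [] //]]]|[[X0 [r [H [[->] ->]]]]|]]; first by exists r.
by rewrite /= => H; intuition discriminate.
Qed.

Lemma rules_of_hash b rhs : List.In (hash_of b, rhs) grammar <->
  rhs = [:: inr None] \/ rhs = [:: inl (start_of (~~ b))].
Proof.
rewrite in_grammar; split.
- case=> [[X [r [_ []]]]|[[X [r [_ []]]]|]] //.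
  by case: b => /=; rewrite /hash_of /start; firstorder congruence.
- by case=> ->; right; right; case: b => /=; tauto.
Qed.

Lemma rules_of_start rhs : List.In (start, rhs) grammar <->
  rhs = [:: inl (start_of true)] \/ rhs = [:: inl (start_of false)].
Proof.
rewrite in_grammar; split.
- case=> [[X [r [_ []]]]|[[X [r [_ []]]]|]] //.
  by rewrite /= /hash_of /start; firstorder congruence.
- by case=> ->; right; right; rewrite /=; tauto.
Qed.

Lemma yields_hash b y :
  yields grammar [:: inl (hash_of b)] y <-> y = [:: None] \/ yields grammar [:: inl (start_of (~~ b))] y.
Proof. by rewrite (yields_two_rules y (rules_of_hash b)) yields_letterE. Qed.

Lemma yields_startS w :
  yields grammar [:: inl (start_of true)] w <->
  nest genS inl (yields grammar [:: inl (start_of false)]) w.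
Proof.
apply: (yields_hash_subst (R0 := RS)) => [X rhs H||z|y].
- by apply/in_grammar; left; exists X, rhs.
- exact: lifted_rulesS.
- by rewrite -RS_WP WP_pairE.
- exact: yields_hash.
Qed.

Lemma yields_startT w :
  yields grammar [:: inl (start_of false)] w <->
  nest genT inr (yields grammar [:: inl (start_of true)]) w.
Proof.
apply: (yields_hash_subst (R0 := RT)) => [X rhs H||z|y].
- by apply/in_grammar; right; left; exists X, rhs.
- exact: lifted_rulesT.
- by rewrite -RT_WP WP_pairE.
- exact: yields_hash.
Qed.

Lemma WP_side_left w : WP_side genS genT true w <-> nest genS inl (WP_side genS genT false) w.
Proof.
apply: (WP_side_nestE (inj := inl)) => // [x y [] //|x y|c].
- exact: val_inj.
- by split=> [|[a ->]] //; case: c => // a _; exists a.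
Qed.

Lemma WP_side_right w : WP_side genS genT false w <-> nest genT inr (WP_side genS genT true) w.
Proof.
apply: (WP_side_nestE (inj := inr)) => // [x y [] //|x y|c].
- exact: val_inj.
- by split=> [|[a ->]] //; case: c => // a _; exists a.
Qed.

Lemma grammar_WP w : WP (gen_fp genS genT) w <-> yields grammar [:: inl start] w.
Proof.
have lang := local_fixpoint_unique (@nest_local _ _ _ genS inl) (@nest_local _ _ _ genT inr)
  yields_startS yields_startT WP_side_left WP_side_right.
rewrite WP_sides (yields_two_rules w rules_of_start).
by have [-> ->] := lang w.
Qed.
End FreeProductGrammar.

Lemma ucf_free_product (S T : semigroup) : UCF S -> UCF T -> UCF (free_product S T).
Proof.
case=> AS [genS [gensS [NS [ZS [RS HRS]]]]]; case=> AT [genT [gensT [NT [ZT [RT HRT]]]]].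
exists (AS + AT)%type, (gen_fp genS genT); split.
- apply: generates_of_atoms => -[s|t].
  + have [u Hu] := gensS s; exists (map inl u).
    by rewrite (eval_hom (genA := genS) (phi := fun s => atom (inl s))) ?Hu // => x y; apply: val_inj.
  + have [u Hu] := gensT t; exists (map inr u).
    by rewrite (eval_hom (genA := genT) (phi := fun t => atom (inr t))) ?Hu // => x y; apply: val_inj.
- exists (nonterminal NS NT), (start NS NT), (grammar ZS ZT RS RT) => w.
  rewrite -yields_derivesE; apply: grammar_WP => v; rewrite yields_derivesE.
    exact: HRS.
  exact: HRT.
Qed.

Theorem mainTheorem9 (S T : semigroup) :
  UCF (free_product S T) <-> UCF S /\ UCF T.
Proof.
split; first by move=> H; split; [exact: ucf_left_factor H|exact: ucf_right_factor H].
by case; apply: ucf_free_product.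
Qed.
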